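(* Let a target $T$ be fixed at a point $(x_T,y_T)\in\mathbb{R}^2$, and consider a UAV with dynamics $\dot x=V\cos\psi$, $\dot y=V\sin\psi$, $\dot\psi=\omega$, $V>0$ constant. Let $r(t)$ be the distance from the UAV to $T$, and let the control input be $$\omega=\begin{cases} k\left[V\cos\!\left(\pi-\sin^{-1}\!\left(\frac{r_a}{r(t)}\right)\right)-\dot r(t)\right], & r(t)\ge r_a,\\ 0,&\text{otherwise},\end{cases}$$ with constants $k>0$ and $r_a\ge 0$. Then the UAV moves inside the circle $C_a$ at most once, i.e., the set $\{t\ge 0: r(t)<r_a\}$ is either empty or a single interval.
   Context: $C_a$ is the circle centered at $T$ with radius $r_a$; the UAV is said to be inside $C_a$ if $r(t)<r_a$ and outside if $r(t)\ge r_a$. $\sin^{-1}$ is the principal arcsine. *)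

From Stdlib Require Export Reals.
From Coquelicot Require Export Coquelicot.
Open Scope R_scope.

Definition dist_to (xT yT : R) (x y : R -> R) (t : R) : R :=
  sqrt ((x t - xT) ^ 2 + (y t - yT) ^ 2).

Definition control (k V ra : R) (r : R -> R) (t : R) : R :=
  if Rle_dec ra (r t) then k * (V * cos (PI - asin (ra / r t)) - Derive r t)
  else 0.

From Stdlib Require Import Lra Psatz Classical.

(* Write p for the position of the UAV relative to T and e for its heading, so that
   r' = V (p.e) / r.  Inside C_a the control vanishes and the UAV flies straight, hence it
   leaves C_a with p.e > 0 and can only enter it with p.e < 0.  Outside C_a the control law
   reads omega = - k V H / r with H = p.e + sqrt (r^2 - r_a^2), and along the motion
   H' >= - k V H as long as H >= 0, so e^(kVt) H is nondecreasing (off the countably many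
   switching instants, which a monotonicity argument can ignore).  Since H = p.e on C_a, the
   positivity of H at the exit persists until the next visit of C_a, where p.e > 0 again
   forbids entering. *)

Lemma continuous_gt_near (f : R -> R) (x c : R) : continuous f x -> c < f x ->
  exists del, 0 < del /\ forall y, Rabs (y - x) < del -> c < f y.
Proof.
  intros Hf Hc.
  destruct (Hf (fun z => c < z) (open_gt c (f x) Hc)) as [del Hdel].
  exists del; split; [apply cond_pos | exact Hdel].
Qed.

Lemma continuous_lt_near (f : R -> R) (x c : R) : continuous f x -> f x < c ->
  exists del, 0 < del /\ forall y, Rabs (y - x) < del -> f y < c.
Proof.
  intros Hf Hc.
  destruct (Hf (fun z => z < c) (open_lt c (f x) Hc)) as [del Hdel].
  exists del; split; [apply cond_pos | exact Hdel].
Qed.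

Lemma is_derive_continuous (f : R -> R) (x l : R) : is_derive f x l -> continuous f x.
Proof. intros Hf. apply (ex_derive_continuous f). exists l. exact Hf. Qed.

Lemma exists_small_step (del l : R) : 0 < del -> 0 < l -> exists h, 0 < h < del /\ h < l.
Proof.
  intros Hdel Hl. exists (Rmin del l / 2).
  pose proof (Rmin_l del l). pose proof (Rmin_r del l).
  pose proof (Rmin_glb_lt _ _ _ Hdel Hl). lra.
Qed.

Lemma is_derive_pos_locally (f : R -> R) (x d : R) : is_derive f x d -> 0 < d ->
  exists del, 0 < del /\ forall h, 0 < h < del -> f (x - h) < f x < f (x + h).
Proof.
  intros Hf Hd. apply is_derive_Reals in Hf.
  destruct (Hf d Hd) as [del Hdel].
  exists del; split; [apply cond_pos|].
  assert (Hquot : forall h, h <> 0 -> Rabs h < del -> 0 < (f (x + h) - f x) * h).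
  { intros h Hh Hhd. specialize (Hdel h Hh Hhd). apply Rabs_def2 in Hdel.
    replace ((f (x + h) - f x) * h) with ((f (x + h) - f x) / h * (h * h)) by (field; exact Hh).
    apply Rmult_lt_0_compat; [lra | nra]. }
  intros h Hh.
  pose proof (Hquot h ltac:(lra) ltac:(rewrite Rabs_right; lra)).
  pose proof (Hquot (- h) ltac:(lra) ltac:(rewrite Rabs_left; lra)).
  replace (x - h) with (x + - h) by ring. nra.
Qed.

Lemma is_lub_gt (S : R -> Prop) (T t : R) : is_lub S T -> t < T -> exists z, S z /\ t < z.
Proof.
  intros [_ Hlub] HtT. apply NNPP. intros Hnone.
  assert (T <= t); [|lra].
  apply Hlub. intros z Hz. apply Rnot_lt_le. intros Htz. apply Hnone. exists z. auto.
Qed.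

Lemma first_root (phi : R -> R) (u v : R) : u < v ->
  (forall t, u <= t <= v -> continuous phi t) -> 0 < phi u -> phi v <= 0 ->
  exists c, u < c <= v /\ phi c = 0 /\ forall t, u <= t < c -> 0 < phi t.
Proof.
  intros Huv Hc Hu Hv.
  set (S t := u <= t <= v /\ forall s, u <= s <= t -> 0 < phi s).
  assert (HSu : S u).
  { split; [lra|]. intros s Hs. replace s with u by lra. exact Hu. }
  destruct (completeness S) as [T HT].
  { exists v. intros t [Ht _]. lra. }
  { exists u. exact HSu. }
  assert (HuT : u <= T) by (apply HT, HSu).
  assert (HTv : T <= v) by (apply HT; intros t [Ht _]; lra).
  assert (Hbefore : forall t, u <= t < T -> 0 < phi t).
  { intros t Ht. destruct (is_lub_gt S T t HT) as [z [[_ Hz] Htz]]; [lra|]. apply Hz; lra. }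
  assert (HcT := Hc T (conj HuT HTv)).
  assert (Hle : phi T <= 0).
  { apply Rnot_lt_le. intros HT0.
    destruct (continuous_gt_near phi T 0 HcT HT0) as [del [Hdel Hnear]].
    destruct (Req_dec T v) as [HTv'|HTv']; [subst T; lra|].
    destruct (exists_small_step del (v - T)) as [h [Hh Hhv]]; [lra|lra|].
    assert (HST : S (T + h)).
    { split; [lra|]. intros s Hs. destruct (Rlt_le_dec s T); [apply Hbefore; lra|].
      apply Hnear. rewrite Rabs_right; lra. }
    assert (T + h <= T) by (apply HT, HST). lra. }
  assert (HuT' : u < T) by (destruct (Req_dec u T) as [<-|]; lra).
  assert (Hge : 0 <= phi T).
  { apply Rnot_lt_le. intros HT0.
    destruct (continuous_lt_near phi T 0 HcT HT0) as [del [Hdel Hnear]].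
    destruct (exists_small_step del (T - u)) as [h [Hh HhT]]; [lra|lra|].
    assert (phi (T - h) < 0) by (apply Hnear; rewrite Rabs_left; lra).
    assert (0 < phi (T - h)) by (apply Hbefore; lra). lra. }
  exists T. split; [lra|]. split; [lra|exact Hbefore].
Qed.

Lemma last_root (phi : R -> R) (u v : R) : u < v ->
  (forall t, u <= t <= v -> continuous phi t) -> phi u <= 0 -> 0 < phi v ->
  exists c, u <= c < v /\ phi c = 0 /\ forall t, c < t <= v -> 0 < phi t.
Proof.
  intros Huv Hc Hu Hv.
  destruct (first_root (fun t => phi (- t)) (- v) (- u)) as [c [Hc1 [Hc2 Hc3]]].
  - lra.
  - intros t Ht. apply (continuous_comp (fun t => - t) phi).
    + apply (is_derive_continuous _ _ (-1)). auto_derive; [exact I | ring].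
    + apply Hc. lra.
  - rewrite Ropp_involutive. exact Hv.
  - rewrite Ropp_involutive. exact Hu.
  - exists (- c). split; [lra|]. split; [exact Hc2|].
    intros t Ht. rewrite <- (Ropp_involutive t). apply Hc3. lra.
Qed.

(* Nested intervals, the [n+1]-st one missing [f n]. *)
Fixpoint avoiding_interval (f : nat -> R) (a b : R) (n : nat) : R * R :=
  match n with
  | O => (a, b)
  | S m => let I := avoiding_interval f a b m in
           if Rle_dec (f m) ((fst I + snd I) / 2)
           then ((fst I + 3 * snd I) / 4, snd I)
           else (fst I, (3 * fst I + snd I) / 4)
  end.

Section AvoidingInterval.
Variables (f : nat -> R) (a b : R).
Hypothesis Hab : a < b.
Local Notation lo n := (fst (avoiding_interval f a b n)).
Local Notation hi n := (snd (avoiding_interval f a b n)).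

Lemma avoiding_interval_step n :
  lo n < hi n /\ lo n <= lo (S n) /\ hi (S n) <= hi n /\ (f n < lo (S n) \/ hi (S n) < f n).
Proof.
  assert (Hlt : forall m, lo m < hi m).
  { induction m as [|m IH]; simpl; [exact Hab|]. destruct (Rle_dec _ _); simpl; lra. }
  specialize (Hlt n). simpl. destruct (Rle_dec _ _); simpl; lra.
Qed.

Lemma avoiding_interval_mono n m : (n <= m)%nat -> lo n <= lo m /\ hi m <= hi n.
Proof.
  induction 1 as [|m _ IH]; [lra|]. pose proof (avoiding_interval_step m). lra.
Qed.

Lemma avoiding_interval_lo_le_hi n m : lo n <= hi m.
Proof.
  destruct (avoiding_interval_mono n (max n m) (Nat.le_max_l n m)).
  destruct (avoiding_interval_mono m (max n m) (Nat.le_max_r n m)).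
  pose proof (avoiding_interval_step (max n m)). lra.
Qed.

End AvoidingInterval.

Lemma exists_not_in_seq (f : nat -> R) (a b : R) : a < b ->
  exists c, a < c < b /\ forall n, f n <> c.
Proof.
  intros Hab.
  set (a0 := (3 * a + b) / 4). set (b0 := (a + 3 * b) / 4).
  assert (H0 : a0 < b0) by (unfold a0, b0; lra).
  set (Lo z := exists n, z = fst (avoiding_interval f a0 b0 n)).
  destruct (completeness Lo) as [c [Hub Hlub]].
  { exists b0. intros z [n ->]. apply (avoiding_interval_lo_le_hi f a0 b0 H0 n 0). }
  { exists a0. exists 0%nat. reflexivity. }
  assert (Hlo : forall n, fst (avoiding_interval f a0 b0 n) <= c).
  { intros n. apply Hub. exists n. reflexivity. }
  assert (Hhi : forall n, c <= snd (avoiding_interval f a0 b0 n)).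
  { intros n. apply Hlub. intros z [m ->]. apply avoiding_interval_lo_le_hi, H0. }
  exists c. split.
  - pose proof (Hlo 0%nat). pose proof (Hhi 0%nat). simpl in *. unfold a0, b0 in *. lra.
  - intros n Hn. pose proof (avoiding_interval_step f a0 b0 H0 n).
    pose proof (Hlo (S n)). pose proof (Hhi (S n)). lra.
Qed.

(* If [G u > G v], pick a level [c] between them that [G] does not take on [E]; the last
   time [G] equals [c] lies off [E], and there [G' > 0] contradicts [G < c] afterwards. *)
Lemma le_of_is_derive_pos_countable (G : R -> R) (E : nat -> R) (u v : R) : u < v ->
  (forall t, u <= t <= v -> continuous G t) ->
  (forall t, u < t < v -> (forall n, E n <> t) -> exists d, 0 < d /\ is_derive G t d) ->
  G u <= G v.
Proof.
  intros Huv Hc Hd. apply Rnot_lt_le. intros Hvu.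
  destruct (exists_not_in_seq (fun n => G (E n)) (G v) (G u) Hvu) as [c [Hcuv HcE]].
  destruct (last_root (fun t => c - G t) u v Huv) as [T [HT [HGT Hafter]]].
  { intros t Ht. apply (continuous_minus (fun _ => c) G); [apply continuous_const | apply Hc, Ht]. }
  { lra. } { lra. }
  assert (HuT : u < T) by (destruct (Req_dec u T) as [<-|]; lra).
  assert (HTE : forall n, E n <> T).
  { intros n HnT. apply (HcE n). simpl. rewrite HnT. lra. }
  destruct (Hd T (conj HuT (proj2 HT)) HTE) as [d [Hd0 HdT]].
  destruct (is_derive_pos_locally G T d HdT Hd0) as [del [Hdel Hincr]].
  destruct (exists_small_step del (v - T)) as [h [Hh Hhv]]; [lra|lra|].
  specialize (Hafter (T + h)). specialize (Hincr h Hh). simpl in *. lra.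
Qed.

Lemma le_of_is_derive_nonneg_countable (G : R -> R) (E : nat -> R) (u v : R) : u <= v ->
  (forall t, u <= t <= v -> continuous G t) ->
  (forall t, u < t < v -> (forall n, E n <> t) -> exists d, 0 <= d /\ is_derive G t d) ->
  G u <= G v.
Proof.
  intros Huv Hc Hd. destruct (Req_dec u v) as [<-|Hne]; [lra|].
  apply Rnot_lt_le. intros Hvu.
  set (e := (G u - G v) / (2 * (v - u))).
  assert (He : 0 < e) by (apply Rdiv_lt_0_compat; lra).
  assert (Hlin : forall t, is_derive (fun s => e * s) t e).
  { intros t. auto_derive; [exact I | ring]. }
  assert (G u + e * u <= G v + e * v).
  { apply (le_of_is_derive_pos_countable (fun t => G t + e * t) E); [lra| |].
    - intros t Ht. apply (continuous_plus G (fun s => e * s)); [apply Hc, Ht|].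
      apply (is_derive_continuous _ _ e), Hlin.
    - intros t Ht Hn. destruct (Hd t Ht Hn) as [d [Hd0 Hdt]].
      exists (d + e). split; [lra|]. apply (is_derive_plus G (fun s => e * s)); [exact Hdt | apply Hlin]. }
  assert (e * (v - u) = (G u - G v) / 2) by (unfold e; field; lra). nra.
Qed.

Lemma eq_of_is_derive_zero_countable (G : R -> R) (E : nat -> R) (u v : R) : u <= v ->
  (forall t, u <= t <= v -> continuous G t) ->
  (forall t, u < t < v -> (forall n, E n <> t) -> is_derive G t 0) ->
  G u = G v.
Proof.
  intros Huv Hc Hd. apply Rle_antisym.
  - apply (le_of_is_derive_nonneg_countable G E u v Huv Hc).
    intros t Ht Hn. exists 0. split; [lra | apply Hd; assumption].
  - assert (- G u <= - G v); [|lra].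
    apply (le_of_is_derive_nonneg_countable (fun t => - G t) E u v Huv).
    + intros t Ht. apply (continuous_opp G), Hc, Ht.
    + intros t Ht Hn. exists (- 0). split; [lra|]. apply (is_derive_opp G), Hd; assumption.
Qed.

Lemma is_derive_const_affine (f : R -> R) (w u v : R) : u <= v ->
  (forall t, u <= t <= v -> is_derive f t w) -> f v - f u = w * (v - u).
Proof.
  intros Huv Hd.
  assert (Hlin : forall t, is_derive (fun s => w * s) t w).
  { intros t. auto_derive; [exact I | ring]. }
  assert (f u - w * u = f v - w * v); [|lra].
  apply (eq_of_is_derive_zero_countable (fun t => f t - w * t) (fun _ => u) u v Huv).
  - intros t Ht. apply (continuous_minus f (fun s => w * s)).
    + apply (is_derive_continuous _ _ w), Hd, Ht.
    + apply (is_derive_continuous _ _ w), Hlin.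
  - intros t Ht _. replace 0 with (w - w) by ring.
    apply (is_derive_minus f (fun s => w * s)); [apply Hd; lra | apply Hlin].
Qed.

Lemma continuous_Rmin (f g : R -> R) (t : R) : continuous f t -> continuous g t ->
  continuous (fun s => Rmin (f s) (g s)) t.
Proof.
  intros Hf Hg.
  apply (continuous_ext (fun s => (f s + g s - Rabs (f s - g s)) / 2)).
  - intros s. unfold Rmin. destruct (Rle_dec (f s) (g s)).
    + rewrite Rabs_left1; lra.
    + rewrite Rabs_right; lra.
  - apply (continuous_mult (fun s => f s + g s - Rabs (f s - g s)) (fun _ => / 2));
      [|apply continuous_const].
    apply (continuous_minus (fun s => f s + g s) (fun s => Rabs (f s - g s))).
    + apply (continuous_plus f g); assumption.
    + apply (continuous_Rabs_comp (fun s => f s - g s)), (continuous_minus f g); assumption.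
Qed.

Ltac continuity_R :=
  repeat match goal with
  | |- continuous (fun s => @?f s + @?g s) _ => apply (continuous_plus f g)
  | |- continuous (fun s => @?f s - @?g s) _ => apply (continuous_minus f g)
  | |- continuous (fun s => @?f s * @?g s) _ => apply (continuous_mult f g)
  | |- continuous (fun s => Rmin (@?f s) (@?g s)) _ => apply (continuous_Rmin f g)
  | |- continuous (fun s => sqrt (@?f s)) _ => apply (continuous_sqrt_comp f)
  | |- continuous (fun s => cos (@?f s)) _ => apply (continuous_cos_comp f)
  | |- continuous (fun s => sin (@?f s)) _ => apply (continuous_sin_comp f)
  | |- continuous (fun s => exp (@?f s)) _ => apply (continuous_exp_comp f)
  | |- continuous (fun _ => _) _ => apply continuous_const
  | |- continuous (fun s => s) _ => apply continuous_id
  end.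

Lemma cos_pi_minus_asin (a b : R) : 0 <= a <= b -> 0 < b ->
  cos (PI - asin (a / b)) = - (sqrt (b ^ 2 - a ^ 2) / b).
Proof.
  intros Hab Hb.
  assert (Hdiv : 0 <= a / b <= 1).
  { assert (Hinv : 0 < / b) by (apply Rinv_0_lt_compat, Hb).
    assert (b * / b = 1) by (field; lra). unfold Rdiv. split; nra. }
  rewrite Rtrigo_facts.cos_pi_minus, cos_asin by lra. f_equal.
  apply sqrt_lem_1.
  - unfold Rsqr. nra.
  - apply Rdiv_le_0_compat; [apply sqrt_pos | exact Hb].
  - replace (sqrt (b ^ 2 - a ^ 2) / b * (sqrt (b ^ 2 - a ^ 2) / b))
      with (sqrt (b ^ 2 - a ^ 2) * sqrt (b ^ 2 - a ^ 2) / (b * b)) by (field; lra).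
    rewrite sqrt_sqrt by nra. unfold Rsqr. field. lra.
Qed.

Definition sqdist (xT yT : R) (x y : R -> R) (t : R) : R :=
  (x t - xT) ^ 2 + (y t - yT) ^ 2.

Definition radial (xT yT : R) (x y psi : R -> R) (t : R) : R :=
  (x t - xT) * cos (psi t) + (y t - yT) * sin (psi t).

Definition transverse (xT yT : R) (x y psi : R -> R) (t : R) : R :=
  (y t - yT) * cos (psi t) - (x t - xT) * sin (psi t).

(* For [r > r_a], [tangent_margin > 0] iff the ray along the heading misses the closed disc
   bounded by C_a. *)
Definition tangent_margin (xT yT ra : R) (x y psi : R -> R) (t : R) : R :=
  radial xT yT x y psi t + sqrt (sqdist xT yT x y t - ra ^ 2).

Section Pursuit.

Context {xT yT V k ra : R} {x y psi : R -> R} {E : nat -> R}.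
Hypotheses (hV : 0 < V) (hk : 0 < k) (hra : 0 < ra).
Hypothesis hcpsi : forall t, 0 <= t -> continuous psi t.
Hypothesis hx : forall t, 0 <= t -> is_derive x t (V * cos (psi t)).
Hypothesis hy : forall t, 0 <= t -> is_derive y t (V * sin (psi t)).
Hypothesis hpsi : forall t, 0 <= t -> (forall n, E n <> t) ->
  is_derive psi t (control k V ra (dist_to xT yT x y) t).

Local Notation r := (dist_to xT yT x y).
Local Notation sqd := (sqdist xT yT x y).
Local Notation rad := (radial xT yT x y psi).
Local Notation trans := (transverse xT yT x y psi).
Local Notation margin := (tangent_margin xT yT ra x y psi).

Lemma sqdist_nonneg t : 0 <= sqd t.
Proof. unfold sqdist. pose proof (pow2_ge_0 (x t - xT)). pose proof (pow2_ge_0 (y t - yT)). lra. Qed.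

Lemma dist_nonneg t : 0 <= r t.
Proof. apply sqrt_pos. Qed.

Lemma dist_sqr t : r t * r t = sqd t.
Proof. apply sqrt_sqrt, sqdist_nonneg. Qed.

Lemma radial_sqr_add_transverse_sqr t : rad t ^ 2 + trans t ^ 2 = sqd t.
Proof.
  unfold radial, transverse, sqdist. pose proof (sin2_cos2 (psi t)). unfold Rsqr in *.
  transitivity (((x t - xT) ^ 2 + (y t - yT) ^ 2) * (sin (psi t) * sin (psi t) + cos (psi t) * cos (psi t)));
    [ring | rewrite H; ring].
Qed.

Lemma is_derive_sqdist t : 0 <= t -> is_derive sqd t (2 * V * rad t).
Proof.
  intros Ht. unfold sqdist, radial.
  auto_derive.
  - split; [exists (V * cos (psi t)); apply hx, Ht|].
    split; [exists (V * sin (psi t)); apply hy, Ht | exact I].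
  - replace (Derive (fun s => x s) t) with (V * cos (psi t))
      by (symmetry; apply is_derive_unique, hx, Ht).
    replace (Derive (fun s => y s) t) with (V * sin (psi t))
      by (symmetry; apply is_derive_unique, hy, Ht).
    ring.
Qed.

Lemma is_derive_dist t : 0 <= t -> 0 < sqd t -> is_derive r t (V * rad t / r t).
Proof.
  intros Ht Hq.
  assert (Hr : 0 < sqrt (sqd t)) by (apply sqrt_lt_R0, Hq).
  change (is_derive (fun s => sqrt (sqd s)) t (V * rad t / sqrt (sqd t))).
  replace (V * rad t / sqrt (sqd t)) with (2 * V * rad t / (2 * sqrt (sqd t))) by (field; lra).
  apply is_derive_sqrt; [apply is_derive_sqdist, Ht | exact Hq].
Qed.

Lemma continuous_dist t : 0 <= t -> continuous r t.
Proof.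
  intros Ht. apply (continuous_sqrt_comp sqd).
  apply (is_derive_continuous _ _ _ (is_derive_sqdist t Ht)).
Qed.

Lemma continuous_tangent_margin t : 0 <= t -> continuous margin t.
Proof.
  intros Ht. unfold tangent_margin, radial. continuity_R.
  - apply (is_derive_continuous _ _ _ (hx t Ht)).
  - apply hcpsi, Ht.
  - apply (is_derive_continuous _ _ _ (hy t Ht)).
  - apply hcpsi, Ht.
  - apply (is_derive_continuous _ _ _ (is_derive_sqdist t Ht)).
Qed.

Lemma tangent_margin_on_circle t : r t = ra -> margin t = rad t.
Proof.
  intros Hrt. unfold tangent_margin. rewrite <- dist_sqr, Hrt.
  replace (ra * ra - ra ^ 2) with 0 by ring. rewrite sqrt_0. ring.
Qed.

Lemma control_outside t : 0 <= t -> ra <= r t ->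
  control k V ra r t = - (k * V * margin t / r t).
Proof.
  intros Ht Hrt.
  assert (Hr0 : 0 < r t) by lra.
  assert (Hq : 0 < sqd t) by (rewrite <- dist_sqr; nra).
  unfold control. destruct (Rle_dec ra (r t)) as [_|]; [|lra].
  rewrite (is_derive_unique _ _ _ (is_derive_dist t Ht Hq)).
  rewrite cos_pi_minus_asin by lra.
  replace (r t ^ 2) with (sqd t) by (rewrite <- dist_sqr; ring).
  unfold tangent_margin. field. lra.
Qed.

Lemma is_derive_radial t w : 0 <= t -> is_derive psi t w -> is_derive rad t (V + w * trans t).
Proof.
  intros Ht Hw. unfold radial, transverse.
  auto_derive.
  - split; [exists (V * cos (psi t)); apply hx, Ht|].
    split; [exists w; exact Hw|].
    split; [exists (V * sin (psi t)); apply hy, Ht|].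
    split; [exists w; exact Hw | exact I].
  - replace (Derive (fun s => x s) t) with (V * cos (psi t))
      by (symmetry; apply is_derive_unique, hx, Ht).
    replace (Derive (fun s => y s) t) with (V * sin (psi t))
      by (symmetry; apply is_derive_unique, hy, Ht).
    replace (Derive (fun s => psi s) t) with w by (symmetry; apply is_derive_unique, Hw).
    pose proof (sin2_cos2 (psi t)). unfold Rsqr in *. nra.
Qed.

Lemma is_derive_tangent_margin_outside t : 0 <= t -> (forall n, E n <> t) -> ra < r t ->
  is_derive margin t (margin t * (V / sqrt (sqd t - ra ^ 2) - k * V * trans t / r t)).
Proof.
  intros Ht HtE Hrt.
  assert (Hsq : ra ^ 2 < sqd t) by (rewrite <- dist_sqr; nra).
  assert (HS : 0 < sqrt (sqd t - ra ^ 2)) by (apply sqrt_lt_R0; lra).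
  assert (Hw := hpsi t Ht HtE). rewrite control_outside in Hw by lra.
  assert (HSd : is_derive (fun s => sqrt (sqd s - ra ^ 2)) t
                  (2 * V * rad t / (2 * sqrt (sqd t - ra ^ 2)))).
  { apply (is_derive_sqrt (fun s => sqd s - ra ^ 2)); [|lra].
    replace (2 * V * rad t) with (2 * V * rad t - 0) by ring.
    apply (is_derive_minus sqd (fun _ => ra ^ 2)); [apply is_derive_sqdist, Ht | apply (is_derive_const (ra ^ 2))]. }
  assert (Hd := is_derive_plus _ _ _ _ _ (is_derive_radial t _ Ht Hw) HSd).
  replace (margin t * (V / sqrt (sqd t - ra ^ 2) - k * V * trans t / r t))
    with ((V + - (k * V * margin t / r t) * trans t) + 2 * V * rad t / (2 * sqrt (sqd t - ra ^ 2)))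
    by (unfold tangent_margin; field; lra).
  exact Hd.
Qed.

Lemma tangent_margin_pos_persists u v : 0 <= u <= v ->
  (forall t, u < t < v -> ra < r t /\ 0 < margin t) -> 0 < margin u -> 0 < margin v.
Proof.
  intros Huv Hout Hu.
  assert (Hexp : forall t, is_derive (fun s => exp (k * V * s)) t (k * V * exp (k * V * t))).
  { intros t. auto_derive; [exact I | ring]. }
  assert (Hweighted : margin u * exp (k * V * u) <= margin v * exp (k * V * v)).
  { apply (le_of_is_derive_nonneg_countable (fun s => margin s * exp (k * V * s)) E u v);
      [lra| |].
    - intros t Ht. continuity_R. apply continuous_tangent_margin. lra.
    - intros t Ht HtE. destruct (Hout t Ht) as [Hrt Hmt].
      assert (Hd := is_derive_mult _ _ _ _ _
        (is_derive_tangent_margin_outside t ltac:(lra) HtE Hrt) (Hexp t)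
        ltac:(intros; apply Rmult_comm)).
      set (S := sqrt (sqd t - ra ^ 2)) in Hd.
      assert (HS : 0 < S) by (apply sqrt_lt_R0; rewrite <- dist_sqr; nra).
      assert (Htrans : trans t <= r t).
      { pose proof (radial_sqr_add_transverse_sqr t) as Hpyth. rewrite <- dist_sqr in Hpyth. nra. }
      exists (margin t * exp (k * V * t) * (V / S + k * V * (r t - trans t) / r t)). split.
      + assert (0 < V / S) by (apply Rdiv_lt_0_compat; lra).
        assert (0 <= k * V * (r t - trans t) / r t).
        { apply Rdiv_le_0_compat; [apply Rmult_le_pos|]; nra. }
        pose proof (exp_pos (k * V * t)).
        apply Rmult_le_pos; [apply Rmult_le_pos|]; lra.
      + replace (margin t * exp (k * V * t) * (V / S + k * V * (r t - trans t) / r t))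
          with (margin t * (V / S - k * V * trans t / r t) * exp (k * V * t)
                + margin t * (k * V * exp (k * V * t))) by (field; lra).
        exact Hd. }
  pose proof (exp_pos (k * V * u)). pose proof (exp_pos (k * V * v)). nra.
Qed.

Lemma heading_const_inside u v : 0 <= u <= v -> (forall t, u < t < v -> r t < ra) ->
  forall t, u <= t <= v -> psi t = psi u.
Proof.
  intros Huv Hin t Ht. symmetry.
  apply (eq_of_is_derive_zero_countable psi E u t); [lra| |].
  - intros s Hs. apply hcpsi. lra.
  - intros s Hs HsE. assert (Hw := hpsi s ltac:(lra) HsE).
    unfold control in Hw. destruct (Rle_dec ra (r s)) as [Hle|]; [|exact Hw].
    specialize (Hin s ltac:(lra)). lra.
Qed.

Lemma straight_motion u v : 0 <= u <= v -> (forall t, u <= t <= v -> psi t = psi u) ->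
  sqd v = sqd u + 2 * V * (v - u) * rad u + (V * (v - u)) ^ 2 /\ rad v = rad u + V * (v - u).
Proof.
  intros Huv Hconst.
  assert (Hdx : x v - x u = V * cos (psi u) * (v - u)).
  { apply is_derive_const_affine; [lra|]. intros t Ht. rewrite <- (Hconst t Ht). apply hx. lra. }
  assert (Hdy : y v - y u = V * sin (psi u) * (v - u)).
  { apply is_derive_const_affine; [lra|]. intros t Ht. rewrite <- (Hconst t Ht). apply hy. lra. }
  unfold sqdist, radial. rewrite (Hconst v) by lra.
  replace (x v) with (x u + V * cos (psi u) * (v - u)) by lra.
  replace (y v) with (y u + V * sin (psi u) * (v - u)) by lra.
  pose proof (sin2_cos2 (psi u)) as Hpyth. unfold Rsqr in Hpyth.
  set (c := cos (psi u)) in *. set (s := sin (psi u)) in *.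
  split.
  - transitivity ((x u - xT) ^ 2 + (y u - yT) ^ 2
      + 2 * V * (v - u) * ((x u - xT) * c + (y u - yT) * s) + (V * (v - u)) ^ 2 * (s * s + c * c));
      [ring | rewrite Hpyth; ring].
  - transitivity ((x u - xT) * c + (y u - yT) * s + V * (v - u) * (s * s + c * c));
      [ring | rewrite Hpyth; ring].
Qed.

Lemma radial_pos_at_exit u v : 0 <= u < v -> (forall t, u <= t < v -> r t < ra) -> r v = ra ->
  0 < rad v.
Proof.
  intros Huv Hin Hrv.
  assert (Hconst := heading_const_inside u v ltac:(lra) ltac:(intros t Ht; apply Hin; lra)).
  destruct (straight_motion u v ltac:(lra) Hconst) as [Hsq Hrad].
  assert (Hq : sqd u < sqd v).
  { rewrite <- !dist_sqr, Hrv. pose proof (Hin u ltac:(lra)). pose proof (dist_nonneg u). nra. }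
  assert (0 < V * (v - u)) by nra.
  nra.
Qed.

Lemma radial_neg_at_entry u v : 0 <= u < v -> r u = ra -> (forall t, u < t <= v -> r t < ra) ->
  rad u < 0.
Proof.
  intros Huv Hru Hin.
  assert (Hconst : forall t, u <= t <= v -> psi t = psi u).
  { apply heading_const_inside; [lra|]. intros t Ht. apply Hin. lra. }
  destruct (straight_motion u v ltac:(lra) Hconst) as [Hsq _].
  assert (Hq : sqd v < sqd u).
  { rewrite <- !dist_sqr, Hru. pose proof (Hin v ltac:(lra)). pose proof (dist_nonneg v). nra. }
  assert (0 < V * (v - u)) by nra.
  nra.
Qed.

Lemma dist_increasing_at_exit t : 0 <= t -> r t = ra -> 0 < rad t ->
  exists del, 0 < del /\ forall h, 0 < h < del -> r (t - h) < ra < r (t + h).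
Proof.
  intros Ht Hrt Hrad.
  assert (Hq : 0 < sqd t) by (rewrite <- dist_sqr, Hrt; nra).
  rewrite <- Hrt. apply (is_derive_pos_locally _ _ _ (is_derive_dist t Ht Hq)).
  rewrite Hrt. apply Rdiv_lt_0_compat; nra.
Qed.

Lemma no_reentry_after_exit a b : 0 <= a < b -> r a = ra -> 0 < rad a -> r b = ra -> rad b < 0 ->
  False.
Proof.
  intros Hab Hra_a Hrad_a Hra_b Hrad_b.
  destruct (dist_increasing_at_exit a) as [del1 [Hdel1 Hincr]]; [lra | exact Hra_a | exact Hrad_a|].
  destruct (continuous_gt_near margin a 0) as [del2 [Hdel2 Hnear]].
  { apply continuous_tangent_margin. lra. }
  { rewrite tangent_margin_on_circle by exact Hra_a. exact Hrad_a. }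
  destruct (exists_small_step (Rmin del1 del2) (b - a)) as [h [Hh Hhb]];
    [apply Rmin_glb_lt; assumption | lra |].
  pose proof (Rmin_l del1 del2). pose proof (Rmin_r del1 del2).
  set (a' := a + h).
  assert (Ha' : a < a' < b) by (unfold a'; lra).
  destruct (first_root (fun t => Rmin (margin t) (r t - ra)) a' b) as [c [Hc [Hc0 Hbefore]]].
  - lra.
  - intros t Ht. continuity_R; [apply continuous_tangent_margin | apply continuous_dist]; lra.
  - apply Rmin_glb_lt.
    + apply Hnear. unfold a'. rewrite Rabs_right; lra.
    + specialize (Hincr h ltac:(lra)). unfold a'. lra.
  - eapply Rle_trans; [apply Rmin_l|]. rewrite tangent_margin_on_circle by exact Hra_b. lra.
  - assert (Hout : forall t, a' <= t < c -> ra < r t /\ 0 < margin t).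
    { intros t Ht. specialize (Hbefore t Ht).
      pose proof (Rmin_l (margin t) (r t - ra)). pose proof (Rmin_r (margin t) (r t - ra)). lra. }
    assert (Hmc : 0 < margin c).
    { apply (tangent_margin_pos_persists a'); [lra | intros t Ht; apply Hout; lra |].
      apply Hout. lra. }
    assert (Hrc : r c = ra).
    { simpl in Hc0. unfold Rmin in Hc0. destruct (Rle_dec (margin c) (r c - ra)); lra. }
    rewrite tangent_margin_on_circle in Hmc by exact Hrc.
    destruct (dist_increasing_at_exit c) as [del3 [Hdel3 Hincr3]];
      [lra | exact Hrc | exact Hmc |].
    destruct (exists_small_step del3 (c - a')) as [h' [Hh' Hh'c]]; [exact Hdel3 | lra |].
    specialize (Hincr3 h' Hh'). specialize (Hout (c - h') ltac:(lra)). lra.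
Qed.

End Pursuit.

Theorem lemma3 (xT yT V k ra : R) (x y psi : R -> R)
  (hV : 0 < V) (hk : 0 < k) (hra : 0 <= ra)
  (* continuity of the state on t >= 0 *)
  (hcx : forall t, 0 <= t -> continuous x t)
  (hcy : forall t, 0 <= t -> continuous y t)
  (hcpsi : forall t, 0 <= t -> continuous psi t)
  (* kinematics *)
  (hx : forall t, 0 <= t -> is_derive x t (V * cos (psi t)))
  (hy : forall t, 0 <= t -> is_derive y t (V * sin (psi t)))
  (* heading dynamics psi' = omega, except possibly at countably many
     (switching) instants *)
  (hpsi : exists E : nat -> R, forall t, 0 <= t -> (forall n, E n <> t) ->
            is_derive psi t (control k V ra (dist_to xT yT x y) t)) :
  forall t1 t2 t3, 0 <= t1 -> t1 <= t2 -> t2 <= t3 ->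
    dist_to xT yT x y t1 < ra -> dist_to xT yT x y t3 < ra ->
    dist_to xT yT x y t2 < ra.
Proof.
  intros t1 t2 t3 Ht1 Ht12 Ht23 Hr1 Hr3.
  destruct hpsi as [E hE].
  apply Rnot_le_lt. intros Hr2.
  assert (Hra : 0 < ra) by (assert (0 <= dist_to xT yT x y t1) by apply sqrt_pos; lra).
  assert (Ht12' : t1 < t2) by (destruct (Req_dec t1 t2) as [<-|]; lra).
  assert (Ht23' : t2 < t3) by (destruct (Req_dec t2 t3) as [<-|]; lra).
  set (inside t := ra - dist_to xT yT x y t).
  assert (Hinside : forall t, 0 <= t -> continuous inside t).
  { intros t Ht. apply (continuous_minus (fun _ => ra)); [apply continuous_const|].
    apply (continuous_dist hx hy t Ht). }
  destruct (first_root inside t1 t2) as [a [Ha [Hra_a Hbefore_a]]];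
    [lra | intros t Ht; apply Hinside; lra | unfold inside; lra | unfold inside; lra |].
  destruct (last_root inside t2 t3) as [b [Hb [Hra_b Hafter_b]]];
    [lra | intros t Ht; apply Hinside; lra | unfold inside; lra | unfold inside; lra |].
  unfold inside in *.
  assert (Hexit : 0 < radial xT yT x y psi a).
  { apply (radial_pos_at_exit hV hcpsi hx hy hE t1 a); [lra | | lra].
    intros t Ht. specialize (Hbefore_a t Ht). lra. }
  assert (Hentry : radial xT yT x y psi b < 0).
  { apply (radial_neg_at_entry hV hcpsi hx hy hE b t3); [lra | lra |].
    intros t Ht. specialize (Hafter_b t Ht). lra. }
  assert (Hab : a < b) by (destruct (Req_dec a b) as [<-|]; lra).
  apply (no_reentry_after_exit hV hk Hra hcpsi hx hy hE a b); lra.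
Qed.
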